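(* Let $q=2^m$ with $m$ a positive integer, let $b\in\mathbb{F}_q^*$ and $\delta\in\mathbb{F}_{q^2}\setminus\mathbb{F}_q$. Put $$A=b\,\mathrm{Tr}_{q^2/q}(\delta)^2,\quad B=b\delta^{6q}+b\delta^6,\quad C=\mathrm{Tr}_{q^2/q}(\delta)^2,\quad D=A^{-1},$$ and define $S_{-1}=0$, $S_0=1$, $S_i=C^{2^{i-1}}S_{i-1}+D^{2^{i-1}}S_{i-2}$ for $i\geq1$. If the polynomial $$P(x)=b(x^q+x+\delta)^{6}+x$$ permutes $\mathbb{F}_{q^2}$, then its compositional inverse over $\mathbb{F}_{q^2}$ is $$P^{-1}(x)=x+b\left(\delta+\sum_{i=0}^{m-1}\left(D^{2^i}S_{m-2-i}^{2^{i+1}}+D^{1-2^{i}}S_i\right)\left(x^q+x+B\right)^{2^i}\right)^{6}.$$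
   Context: $\mathrm{Tr}_{q^2/q}(y)=y+y^q$. The compositional inverse of a permutation polynomial $f$ of $\mathbb{F}_{Q}$ is the unique polynomial $f^{-1}$ (modulo $x^Q-x$) with $f(f^{-1}(c))=f^{-1}(f(c))=c$ for all $c\in\mathbb{F}_Q$. *)

From HB Require Import structures.
From mathcomp Require Import all_boot all_order all_algebra all_field.
Set Implicit Arguments. Unset Strict Implicit. Unset Printing Implicit Defensive.
Import GRing.Theory.
Local Open Scope ring_scope.

Definition trq (F : fieldType) (q : nat) (y : F) : F := y + y ^+ q.

(* Sseq C D n = (S_{n-1}, S_n) where S_{-1} = 0, S_0 = 1,
   S_i = C^(2^(i-1)) S_{i-1} + D^(2^(i-1)) S_{i-2}  (i >= 1). *)
Fixpoint Sseq (F : fieldType) (C D : F) (n : nat) : F * F :=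
  match n with
  | 0 => (0, 1)
  | k.+1 => let: (a, c) := Sseq C D k in
            (c, C ^+ (2 ^ k) * c + D ^+ (2 ^ k) * a)
  end.

Definition S_ (F : fieldType) (C D : F) (n : nat) : F := (Sseq C D n).2.
Definition Sprev (F : fieldType) (C D : F) (n : nat) : F := (Sseq C D n).1.

From HB Require Import structures.
From mathcomp Require Import all_boot all_order all_algebra all_field.
From mathcomp Require Import ring zify.
Import GRing.Theory.
Local Open Scope ring_scope.

(* Let T x = x + x ^+ q be the trace onto the fixed field Fq of x |-> x ^+ q and
   L u = u ^+ 4 + C * u ^+ 2 + D * u ([linp]), an additive map preserving Fq.
   For u = T x one finds T (P x) + B = A * L u, so P^-1 y = y + b * (delta + u) ^+ 6
   as soon as u is recovered from A * L u; injectivity of P makes L injective on Fq.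
   Split the coefficients of M z = \sum_i c_i * z ^+ 2 ^ i ([Mpoly]) into a part
   built from S_(m-1-i) and a part built from S_i. Thanks to the recurrence
   S_(k+1) = C S_k^2 + D^2 S_(k-1)^4, L (M z) telescopes to D * N * z on Fq, with
   N = S_m + D * S_(m-1)^2 ([Mfactor]) and N^2 = N.
   If N were 0, M would vanish on Fq, hence have zero coefficients (its degree is
   below q); this forces S_(m-1) = 0 and S_m = 1, and then L kills the second part
   of M, whose coefficient of z is 1, a contradiction. So N = 1 and M inverts
   A * L on Fq. *)

Definition fixed_pow (F : fieldType) (n : nat) : {pred F} := [pred x | x ^+ n == x].

Lemma fixed_powP (F : fieldType) n (x : F) : reflect (x ^+ n = x) (x \in fixed_pow F n).
Proof. by rewrite inE; apply: eqP. Qed.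

Set Implicit Arguments.
Unset Strict Implicit.
Unset Printing Implicit Defensive.

Section PowersOfTwo.
Variable R : pzRingType.

Lemma exp2S (x : R) j : x ^+ (2 ^ j.+1) = x ^+ (2 ^ j) ^+ 2.
Proof. by rewrite expnSr exprM. Qed.

Lemma exp2SS (x : R) j : x ^+ (2 ^ j.+2) = x ^+ (2 ^ j) ^+ 4.
Proof. by rewrite !exp2S -exprM. Qed.

Lemma expr0n_exp2 j : (0 : R) ^+ (2 ^ j) = 0.
Proof. by rewrite expr0n expn_eq0. Qed.

End PowersOfTwo.

Section FrobeniusPower.
Variables (F : fieldType) (p : nat).
Hypothesis pcharFp : p \in [pchar F].

Lemma pchar_natX k : [pchar F].-nat (p ^ k)%N.
Proof. by rewrite pnatX pnatE ?(pcharf_prime pcharFp) ?pcharFp. Qed.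

Lemma exprD_pcharX k (x y : F) : (x + y) ^+ (p ^ k) = x ^+ (p ^ k) + y ^+ (p ^ k).
Proof. exact/exprDn_pchar/pchar_natX. Qed.

Lemma fixed_pow_divring_closed k : divring_closed (fixed_pow F (p ^ k)).
Proof.
split=> [|x y|x y]; rewrite !inE ?expr1n //= => /eqP xP /eqP yP.
  by rewrite exprD_pcharX exprNn_pchar ?pchar_natX // xP yP.
by rewrite exprMn exprVn xP yP.
Qed.

End FrobeniusPower.

Section SRecurrence.
Variables (F : fieldType) (C D : F).
Local Notation s := (S_ C D).
Local Notation s' := (Sprev C D).

Lemma S_0 : s 0 = 1. Proof. by []. Qed.
Lemma Sprev_0 : s' 0 = 0. Proof. by []. Qed.

Lemma Sprev_succ k : s' k.+1 = s k.
Proof. by rewrite /Sprev /S_ /=; case: (Sseq C D k). Qed.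

Lemma S_succ k : s k.+1 = C ^+ (2 ^ k) * s k + D ^+ (2 ^ k) * s' k.
Proof. by rewrite /Sprev /S_ /=; case: (Sseq C D k). Qed.

Lemma S_1 : s 1 = C.
Proof. by rewrite S_succ S_0 Sprev_0 mulr1 mulr0 addr0. Qed.

Lemma S_rpred (S : semiringClosed F) k : C \in S -> D \in S -> s k \in S /\ s' k \in S.
Proof.
move=> CS DS; elim: k => [|k [sS s'S]]; first by rewrite S_0 Sprev_0 rpred1 rpred0.
by rewrite Sprev_succ S_succ rpredD ?rpredM ?rpredX.
Qed.

Hypothesis pchar2F : 2 \in [pchar F].

Lemma S_succ_exp2 k j :
  s k.+1 ^+ (2 ^ j) =
  C ^+ (2 ^ (k + j)) * s k ^+ (2 ^ j) + D ^+ (2 ^ (k + j)) * s' k ^+ (2 ^ j).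
Proof. by rewrite S_succ exprD_pcharX // !exprMn -!exprM -!expnD. Qed.

Lemma S_succ_sqr k : s k.+1 = C * s k ^+ 2 + D ^+ 2 * s' k ^+ 4.
Proof.
suff [] : s k.+1 = C * s k ^+ 2 + D ^+ 2 * s' k ^+ 4 /\
          s k.+2 = C * s k.+1 ^+ 2 + D ^+ 2 * s' k.+1 ^+ 4 by [].
elim: k => [|k [IHk IHk1]].
  by rewrite [s 2]S_succ Sprev_succ S_1 S_0 Sprev_0 expn1; split; ring.
have E4 : s k.+1 ^+ 4 = C ^+ (2 ^ k.+2) * s k ^+ 4 + D ^+ (2 ^ k.+2) * s' k ^+ 4.
  by rewrite -[4%N]/(2 ^ 2)%N S_succ_exp2 addn2.
have E2 : s k.+2 ^+ 2 = C ^+ (2 ^ k.+2) * s k.+1 ^+ 2 + D ^+ (2 ^ k.+2) * s k ^+ 2.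
  by rewrite (S_succ_exp2 k.+1 1) Sprev_succ addn1.
split=> //; rewrite [s k.+3]S_succ !Sprev_succ E2 E4 IHk1 Sprev_succ IHk; ring.
Qed.

End SRecurrence.

Section Linearized.
Variables (F : fieldType) (C D : F).
Hypothesis pchar2F : 2 \in [pchar F].

Lemma eq_pchar2 (x y e : F) : x = y + 2 * e -> x = y.
Proof. by have /andP[_ /eqP->] := pchar2F; rewrite mul0r addr0. Qed.

Lemma sqrD_pchar2 (x y : F) : (x + y) ^+ 2 = x ^+ 2 + y ^+ 2.
Proof. exact: (exprD_pcharX pchar2F 1). Qed.

Definition linp (u : F) := u ^+ 4 + C * u ^+ 2 + D * u.

Lemma linpD u v : linp (u + v) = linp u + linp v.
Proof.
by rewrite /linp -[4%N]/(2 ^ 2)%N -[2%N]/(2 ^ 1)%N !exprD_pcharX //; ring.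
Qed.

Lemma linp_rpred (S : semiringClosed F) u : C \in S -> D \in S -> u \in S -> linp u \in S.
Proof. by move=> CS DS uS; rewrite /linp !rpredD ?rpredM ?rpredX. Qed.

Lemma linp0 : linp 0 = 0.
Proof. by rewrite /linp; ring. Qed.

(* In linp (\sum_(i < n) g i.+1 * z ^+ 2 ^ i) the coefficient of z ^+ 2 ^ i.+1 is
   [defect g i], up to the two end corrections collected by [boundary]. *)
Definition boundary (g : nat -> F) (z : F) i :=
  D * g i.+1 * z ^+ (2 ^ i) - g i ^+ 4 * z ^+ (2 ^ i.+1).
Definition defect (g : nat -> F) i := g i ^+ 4 + C * g i.+1 ^+ 2 + D * g i.+2.

Lemma linp_sum_exp2 (g : nat -> F) z n :
  linp (\sum_(i < n) g i.+1 * z ^+ (2 ^ i)) =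
  boundary g z 0 - boundary g z n + \sum_(i < n) defect g i * z ^+ (2 ^ i.+1).
Proof.
elim: n => [|n IHn]; first by rewrite !big_ord0 subrr addr0 linp0.
rewrite !big_ord_recr /= linpD IHn /linp /boundary /defect !exp2SS !exp2S; ring.
Qed.

Section Inversion.
Variable m : nat.
Hypotheses (m_gt0 : (0 < m)%N) (C_fixed : C ^+ (2 ^ m) = C) (D_fixed : D ^+ (2 ^ m) = D).
Hypothesis D_neq0 : D != 0.
Local Notation s := (S_ C D).
Local Notation s' := (Sprev C D).

Definition Mcoef i := D ^+ (2 ^ i) * s' (m.-1 - i) ^+ (2 ^ i.+1) + D * D ^- (2 ^ i) * s i.
Definition Mpoly z := \sum_(i < m) Mcoef i * z ^+ (2 ^ i).
Definition Mfactor := s m + D * s' m.-1 ^+ 2.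

Definition ycoef i := if i is j.+1 then D * D ^- (2 ^ j) * s j else 0.
(* [xcoef 0] does not occur in Mpoly; its value makes [defect xcoef 0] vanish. *)
Definition xcoef i := if i is j.+1 then D ^+ (2 ^ j) * s' (m.-1 - j) ^+ (2 ^ j.+1)
                      else D ^+ (2 ^ m.-1) * s m.-1.

Lemma Mcoef_rpred (S : divringClosed F) i : C \in S -> D \in S -> Mcoef i \in S.
Proof.
move=> CS DS; have SS k := S_rpred k CS DS.
by rewrite /Mcoef rpredD ?rpredM ?rpredV ?rpredX ?(SS _).1 ?(SS _).2.
Qed.

Lemma ycoef_rpred (S : divringClosed F) i : C \in S -> D \in S -> ycoef i \in S.
Proof.
move=> CS DS; case: i => [|j]; first exact: rpred0.
by rewrite /= ?rpredM ?rpredV ?rpredX ?(S_rpred j CS DS).1.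
Qed.

Lemma defect_ycoef i : defect ycoef i = 0.
Proof.
rewrite /defect; case: i => [|j] /=.
  rewrite S_1 S_0 expn1 expr1; by apply: (eq_pchar2 (e := C)); field.
rewrite (S_succ_sqr _ _ pchar2F j.+1) Sprev_succ !exp2SS !exp2S.
set d := D ^+ (2 ^ j).
apply: (eq_pchar2 (e := (D / d * s j) ^+ 4 + C * (D / d ^+ 2 * s j.+1) ^+ 2)).
by field; rewrite expf_neq0.
Qed.

Lemma defect_xcoef_lt i : (i < m.-1)%N -> defect xcoef i = 0.
Proof.
rewrite /defect; case: i => [|j] lt_im /=.
  have [n mE] : exists n, m = n.+2 by exists (m - 2)%N; lia.
  have Dm : D ^+ (2 ^ n.+2) = D by rewrite -mE.
  have E4 : s n.+1 ^+ 4 = C * s n ^+ 4 + D * s' n ^+ 4.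
    by rewrite -[4%N]/(2 ^ 2)%N S_succ_exp2 // addn2 -mE C_fixed D_fixed.
  rewrite mE /= subn0 subn1 /= Sprev_succ exprMn -exp2SS exp2S Dm E4 expn0 expn1 expr1.
  by apply: (eq_pchar2 (e := C * D ^+ 2 * s n ^+ 4 + D ^+ 3 * s' n ^+ 4)); ring.
have [k mE] : exists k, m = (k + j + 3)%N by exists (m - j - 3)%N; lia.
rewrite (_ : m.-1 - j = k.+2)%N; last by lia.
rewrite (_ : m.-1 - j.+1 = k.+1)%N; last by lia.
rewrite (_ : m.-1 - j.+2 = k)%N; last by lia.
rewrite !Sprev_succ !exprMn -!exp2SS -!exp2S S_succ_exp2 //.
rewrite (_ : k + j.+3 = m)%N ?C_fixed ?D_fixed; last by lia.
set d := D ^+ (2 ^ j.+2); set u := s k ^+ (2 ^ j.+3); set v := s' k ^+ (2 ^ j.+3).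
by apply: (eq_pchar2 (e := d * (C * u + D * v))); ring.
Qed.

Lemma xcoef_pred_exp4 : xcoef m.-1 ^+ 4 = D.
Proof.
have [n mE] : exists n, m = n.+1 by exists m.-1; lia.
move: D_fixed; rewrite /xcoef mE /=; case: n {mE} => [|j] /= Dm.
  by rewrite S_0 mulr1 -[4%N]/(2 ^ 2)%N exp2S Dm.
by rewrite subSnn Sprev_succ S_0 expr1n mulr1 -exp2SS.
Qed.

Lemma defect_xcoef_last : defect xcoef m.-1 = D.
Proof.
rewrite /defect xcoef_pred_exp4 /= (_ : m.-1 - m.-1 = 0)%N ?subnn //.
rewrite (_ : m.-1 - m.-1.+1 = 0)%N; last by lia.
by rewrite Sprev_0 !expr0n_exp2 !mulr0 expr0n /= mulr0 !addr0.
Qed.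

Lemma boundary_ycoef0 z : boundary ycoef z 0 = D * z.
Proof. by rewrite /boundary /= S_0 expr0n /= mul0r subr0 expn0 !expr1; field. Qed.

Lemma boundary_ycoef_last z : z ^+ (2 ^ m) = z ->
  boundary ycoef z m = D * s m * z - D ^+ 2 * s m.-1 ^+ 4 * z ^+ 2.
Proof.
move=> zE; have [n mE] : exists n, m = n.+1 by exists m.-1; lia.
move: D_fixed zE; rewrite /boundary /ycoef mE /= => Dm zm.
by rewrite Dm zm exp2S zm !exprMn exprVn -exp2SS exp2S Dm; field.
Qed.

Lemma boundary_xcoef0 z :
  boundary xcoef z 0 = D * (D * s' m.-1 ^+ 2) * z - D ^+ 2 * s m.-1 ^+ 4 * z ^+ 2.
Proof.
have [n mE] : exists n, m = n.+1 by exists m.-1; lia.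
move: D_fixed; rewrite /boundary /xcoef mE /= => Dm.
by rewrite subn0 exprMn -exp2SS (exp2S D n.+1) Dm expn0 expn1 !expr1.
Qed.

Lemma boundary_xcoef_last z : boundary xcoef z m = 0.
Proof.
have [n mE] : exists n, m = n.+1 by exists m.-1; lia.
rewrite /boundary /xcoef mE /= subnn (_ : n - n.+1 = 0)%N; last by lia.
by rewrite Sprev_0 !expr0n_exp2 !mulr0 expr0n !mul0r subrr.
Qed.

Lemma linp_ysum z : z ^+ (2 ^ m) = z ->
  linp (\sum_(i < m) ycoef i.+1 * z ^+ (2 ^ i)) =
  D * (1 + s m) * z + D ^+ 2 * s m.-1 ^+ 4 * z ^+ 2.
Proof.
move=> zE; rewrite linp_sum_exp2 boundary_ycoef0 boundary_ycoef_last //.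
rewrite big1 => [|i _]; last by rewrite defect_ycoef mul0r.
by apply: (eq_pchar2 (e := - (D * s m * z))); ring.
Qed.

Lemma linp_xsum z : z ^+ (2 ^ m) = z ->
  linp (\sum_(i < m) xcoef i.+1 * z ^+ (2 ^ i)) =
  D * (1 + D * s' m.-1 ^+ 2) * z + D ^+ 2 * s m.-1 ^+ 4 * z ^+ 2.
Proof.
move=> zE; rewrite linp_sum_exp2 boundary_xcoef0 boundary_xcoef_last.
have -> : \sum_(i < m) defect xcoef i * z ^+ (2 ^ i.+1) = D * z.
  have [n mE] : exists n, m = n.+1 by exists m.-1; lia.
  have := defect_xcoef_last; rewrite mE big_ord_recr /= => ->; rewrite -mE zE.
  rewrite big1 ?add0r // => i _.
  by rewrite defect_xcoef_lt ?mul0r // mE.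
by apply: (eq_pchar2 (e := - (D ^+ 2 * s m.-1 ^+ 4 * z ^+ 2))); ring.
Qed.

Lemma linp_Mpoly z : z ^+ (2 ^ m) = z -> linp (Mpoly z) = D * Mfactor * z.
Proof.
move=> zE; rewrite /Mpoly (eq_bigr (fun i : 'I_m => xcoef i.+1 * z ^+ (2 ^ i) +
                                                   ycoef i.+1 * z ^+ (2 ^ i))).
  rewrite big_split linpD linp_xsum // linp_ysum // /Mfactor.
  by apply: (eq_pchar2 (e := D * z + D ^+ 2 * s m.-1 ^+ 4 * z ^+ 2)); ring.
by move=> i _; rewrite -mulrDl.
Qed.

Lemma Mfactor_sqr : Mfactor ^+ 2 = Mfactor.
Proof.
have [n mE] : exists n, m = n.+1 by exists m.-1; lia.
have E2 : s n.+1 ^+ 2 = C * s n ^+ 2 + D * s' n ^+ 2.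
  by rewrite (S_succ_exp2 C D pchar2F n 1) addn1 -mE C_fixed D_fixed.
rewrite /Mfactor mE /= sqrD_pchar2 E2 exprMn -exprM (S_succ_sqr _ _ pchar2F); ring.
Qed.

End Inversion.

End Linearized.

Section FiniteField.
Variables (F : finFieldType) (m : nat) (b delta : F).
Hypotheses (m_gt0 : (0 < m)%N) (cardF : #|F| = ((2 ^ m) ^ 2)%N).
Hypotheses (b_fixed : b ^+ (2 ^ m) = b) (b_neq0 : b != 0).
Hypothesis delta_notfixed : delta ^+ (2 ^ m) != delta.

Local Notation q := (2 ^ m)%N.
Local Notation Fq := (fixed_pow F q).
Local Notation T := (trq q).
Local Notation C := (T delta ^+ 2).
Local Notation A := (b * T delta ^+ 2).
Local Notation D := A^-1.
Local Notation B := (b * delta ^+ (6 * q) + b * delta ^+ 6).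

Lemma pchar2_finF : 2 \in [pchar F].
Proof. by apply: (card_finPcharP (n := (m * 2)%N)); rewrite // cardF expnM. Qed.

HB.instance Definition _ :=
  GRing.isDivringClosed.Build F Fq (fixed_pow_divring_closed pchar2_finF m).

Lemma exprqK (x : F) : x ^+ q ^+ q = x.
Proof. by rewrite -exprM mulnn -cardF expf_card. Qed.

Lemma trqD (x y : F) : T (x + y) = T x + T y.
Proof. by rewrite /trq exprD_pcharX ?pchar2_finF // addrACA. Qed.

Lemma trq_Fq (x : F) : T x \in Fq.
Proof. by rewrite inE /trq exprD_pcharX ?pchar2_finF // exprqK addrC. Qed.

Lemma trq_mulFq (u x : F) : u \in Fq -> T (u * x) = u * T x.
Proof. by rewrite inE => /eqP uq; rewrite /trq exprMn uq mulrDr. Qed.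

Lemma trq_eq0 (x : F) : (T x == 0) = (x \in Fq).
Proof. by rewrite inE /trq addr_eq0 oppr_pchar2 ?pchar2_finF // eq_sym. Qed.

Lemma trq_delta_neq0 : T delta != 0.
Proof. by rewrite trq_eq0 inE. Qed.

Definition theta := delta / T delta.

Lemma trq_mul_theta (u : F) : u \in Fq -> T (u * theta) = u.
Proof.
move=> uF; rewrite /theta mulrCA mulrC trq_mulFq ?rpredM ?rpredV ?trq_Fq //.
by rewrite -mulrA mulVf ?trq_delta_neq0 ?mulr1.
Qed.

Lemma card_fixed_pow : (q <= #|Fq|)%N.
Proof.
pose g (x : F) := (T x, x + T x * theta).
have g_inj : injective g by move=> x y [Txy]; rewrite Txy => /addIr.
have sub_g : g @: setT \subset setX [set x in Fq] [set x in Fq].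
  apply/subsetP => _ /imsetP[x _ ->]; rewrite in_setX !in_set trq_Fq /=.
  by rewrite -trq_eq0 trqD trq_mul_theta ?trq_Fq // addrr_pchar2 ?pchar2_finF.
have := subset_leq_card sub_g.
by rewrite cardsX card_imset // cardsT cardF !cardsE mulnn leq_exp2r.
Qed.

Lemma linearized_coef_eq0 (e : nat -> F) :
  {in Fq, forall z, \sum_(i < m) e i * z ^+ (2 ^ i) = 0} -> forall i, (i < m)%N -> e i = 0.
Proof.
move=> e0 i lt_im; pose p : {poly F} := \sum_(j < m) e j *: 'X^(2 ^ j).
have p0 : p = 0.
  apply: (@roots_geq_poly_eq0 _ _ (enum Fq)); last 1 first.
  - rewrite -cardE; apply: leq_trans card_fixed_pow.
    apply: leq_trans (size_sum _ _ _) _; apply/bigmax_leqP => j _.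
    by rewrite (leq_trans (size_scale_leq _ _)) // size_polyXn ltn_exp2l.
  - apply/allP => z; rewrite mem_enum => zF.
    rewrite /root horner_sum -[X in _ == X](e0 z zF); apply/eqP; apply: eq_bigr => j _.
    by rewrite hornerZ hornerXn.
  - exact: enum_uniq.
have := congr1 (fun r : {poly F} => r`_(2 ^ i)) p0.
rewrite coef0 coef_sum (bigD1 (Ordinal lt_im)) //= coefZ coefXn eqxx mulr1.
rewrite big1 ?addr0 // => j; rewrite -val_eqE /= => /negbTE neq_ji.
by rewrite coefZ coefXn eqn_exp2l // eq_sym neq_ji mulr0.
Qed.

Lemma A_neq0 : A != 0.
Proof. by rewrite mulf_neq0 // expf_neq0 // trq_delta_neq0. Qed.

Lemma D_neq0 : D != 0.
Proof. by rewrite invr_eq0 A_neq0. Qed.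

Lemma C_Fq : C \in Fq.
Proof. by rewrite rpredX ?trq_Fq. Qed.

Lemma A_Fq : A \in Fq.
Proof. by rewrite rpredM ?C_Fq //; apply/fixed_powP. Qed.

Lemma D_Fq : D \in Fq.
Proof. by rewrite rpredV A_Fq. Qed.

Lemma Mpoly_Fq z : z \in Fq -> Mpoly C D m z \in Fq.
Proof.
by move=> zF; rewrite rpred_sum // => i _; rewrite rpredM ?rpredX ?Mcoef_rpred ?C_Fq ?D_Fq.
Qed.

Lemma mul_A_linp u : A * linp C D u = A * u ^+ 4 + A * C * u ^+ 2 + u.
Proof. by rewrite /linp; field; rewrite trq_delta_neq0. Qed.

Lemma trq_b_pow6 u : u \in Fq -> T (b * (u + delta) ^+ 6) = A * linp C D u + u + B.
Proof.
rewrite inE => /eqP uq.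
have sixE (x y : F) : (x + y) ^+ 6 = (x ^+ 4 + y ^+ 4) * (x ^+ 2 + y ^+ 2).
  by rewrite -[6%N]/(2 ^ 2 + 2 ^ 1)%N exprD !exprD_pcharX ?pchar2_finF.
rewrite mul_A_linp /trq exprMn b_fixed exprAC exprD_pcharX ?pchar2_finF // uq.
rewrite mulnC exprM !sixE !sqrD_pchar2 ?pchar2_finF //.
set d := delta ^+ q.
pose e := b * u ^+ 6 - b * delta ^+ 2 * d ^+ 2 * u ^+ 2 - u.
by apply: (eq_pchar2 pchar2_finF (e := e)); rewrite /e; ring.
Qed.

Definition Pdelta (x : F) := b * (x ^+ q + x + delta) ^+ 6 + x.

Lemma trq_Pdelta x : T (Pdelta x) + B = A * linp C D (T x).
Proof.
rewrite /Pdelta trqD (addrC (x ^+ q)) trq_b_pow6 ?trq_Fq //.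
rewrite -/(T x); by apply: (eq_pchar2 pchar2_finF (e := T x + B)); ring.
Qed.

Hypothesis Pdelta_inj : injective Pdelta.

Lemma linp_inj : {in Fq &, injective (linp C D)}.
Proof.
move=> u1 u2 u1F u2F eq_linp.
pose y u := b * (u + delta) ^+ 6; pose x1 := u1 * theta; pose x2 := x1 + y u1 + y u2.
have T1 : T x1 = u1 by rewrite trq_mul_theta.
have T2 : T x2 = u2.
  rewrite !trqD T1 !trq_b_pow6 // eq_linp.
  by apply: (eq_pchar2 pchar2_finF (e := u1 + A * linp C D u2 + B)); ring.
have Pdelta_x : Pdelta x2 = Pdelta x1.
  rewrite /Pdelta (addrC (x2 ^+ q)) (addrC (x1 ^+ q)) -/(T x1) -/(T x2) T1 T2.
  by apply: (eq_pchar2 pchar2_finF (e := y u2)); rewrite /x2 /y; ring.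
by rewrite -T1 -T2 (Pdelta_inj Pdelta_x).
Qed.

Lemma linp_eq0 u : u \in Fq -> linp C D u = 0 -> u = 0.
Proof. by move=> uF u0; apply: linp_inj; rewrite ?rpred0 ?u0 ?linp0. Qed.

Lemma Mfactor_neq0 : Mfactor C D m != 0.
Proof.
have /fixed_powP Cq := C_Fq; have /fixed_powP Dq := D_Fq.
have D_neq0 := D_neq0; have pchar2 := pchar2_finF.
apply/eqP => N0.
have M0 : {in Fq, forall z, Mpoly C D m z = 0}.
  move=> z zF; apply: linp_eq0; rewrite ?Mpoly_Fq // linp_Mpoly //.
    by rewrite N0 mulr0 mul0r.
  exact/fixed_powP.
have := linearized_coef_eq0 M0 m_gt0; rewrite /Mcoef subn0 S_0 expn0 expn1 !expr1 mulr1.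
rewrite mulfV // => /eqP; rewrite addr_eq0 oppr_pchar2 // => /eqP DS'.
have := linearized_coef_eq0 M0 (_ : m.-1 < m)%N; rewrite ltn_predL => /(_ m_gt0).
rewrite /Mcoef subnn Sprev_0 expr0n_exp2 // mulr0 add0r => /eqP.
have unit_neq0 : D / D ^+ (2 ^ m.-1) != 0 by apply/mulf_neq0/invr_neq0/expf_neq0.
rewrite mulf_eq0 (negbTE unit_neq0) /= => /eqP S_pred0.
have Sm : S_ C D m = 1.
  by move/eqP: N0; rewrite /Mfactor DS' addr_eq0 oppr_pchar2 // => /eqP.
have Y0 : {in Fq, forall z, \sum_(i < m) ycoef C D i.+1 * z ^+ (2 ^ i) = 0}.
  move=> z zF; apply: linp_eq0.
    by rewrite rpred_sum // => i _; rewrite rpredM ?rpredX ?ycoef_rpred ?C_Fq ?D_Fq.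
  rewrite linp_ysum //; last exact/fixed_powP.
  by rewrite Sm S_pred0 addrr_pchar2 // expr0n !mulr0 !mul0r addr0.
have := @linearized_coef_eq0 (fun i => ycoef C D i.+1) Y0 0 m_gt0.
by rewrite /= S_0 expn0 expr1 mulr1 mulfV // => /eqP; rewrite oner_eq0.
Qed.

Lemma Mfactor_eq1 : Mfactor C D m = 1.
Proof.
have /fixed_powP Cq := C_Fq; have /fixed_powP Dq := D_Fq.
apply: (mulfI Mfactor_neq0); rewrite mulr1 -expr2.
exact: (Mfactor_sqr pchar2_finF m_gt0 Cq Dq D_neq0).
Qed.

Lemma Mpoly_linp u : u \in Fq -> Mpoly C D m (A * linp C D u) = u.
Proof.
move=> uF; have /fixed_powP Cq := C_Fq; have /fixed_powP Dq := D_Fq.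
have LF : A * linp C D u \in Fq by rewrite rpredM ?linp_rpred ?A_Fq ?C_Fq ?D_Fq.
apply: linp_inj; rewrite ?Mpoly_Fq // linp_Mpoly ?pchar2_finF ?D_neq0 //.
  by rewrite Mfactor_eq1 mulr1 mulrA mulVf ?A_neq0 ?mul1r.
exact/fixed_powP.
Qed.

Lemma Pinv_Pdelta c :
  Pdelta c + b * (delta + Mpoly C D m (Pdelta c ^+ q + Pdelta c + B)) ^+ 6 = c.
Proof.
rewrite (addrC (Pdelta c ^+ q)) -/(T (Pdelta c)) trq_Pdelta Mpoly_linp ?trq_Fq //.
have -> : delta + T c = c ^+ q + c + delta by rewrite addrC /trq (addrC c).
by rewrite /Pdelta addrAC addrr_pchar2 ?pchar2_finF ?add0r.
Qed.

End FiniteField.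

Theorem theorem3p14 (m : nat) (F : finFieldType) (b delta : F) :
  (0 < m)%N ->
  #|F| = ((2 ^ m) ^ 2)%N ->
  b ^+ (2 ^ m) = b -> b != 0 ->
  delta ^+ (2 ^ m) != delta ->
  let q := (2 ^ m)%N in
  let A := b * (trq q delta) ^+ 2 in
  let B := b * delta ^+ (6 * q) + b * delta ^+ 6 in
  let C := (trq q delta) ^+ 2 in
  let D := A^-1 in
  let P := fun x : F => b * (x ^+ q + x + delta) ^+ 6 + x in
  let Pinv := fun x : F =>
    x + b * (delta + \sum_(i < m)
              (D ^+ (2 ^ i) * (Sprev C D (m.-1 - i)) ^+ (2 ^ i.+1)
               + D * D ^- (2 ^ i) * S_ C D i) * (x ^+ q + x + B) ^+ (2 ^ i)) ^+ 6 in
  injective P ->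
  (forall c : F, P (Pinv c) = c) /\ (forall c : F, Pinv (P c) = c).
Proof.
move=> m_gt0 cardF b_fixed b_neq0 delta_notfixed q A B C D P Pinv P_inj.
have Pinv_P c : Pinv (P c) = c.
  exact: Pinv_Pdelta m_gt0 cardF b_fixed b_neq0 delta_notfixed P_inj c.
split=> // c; have /codomP[x ->] := injF_onto P_inj c.
by rewrite Pinv_P.
Qed.
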